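(* In the Setting below, let $I$ be an $\mathfrak n$-primary ideal of $S$. Then $$g(I)=c(I)-1=\max\{\mathrm{Val}(a)\mid a\in (I:_K\mathfrak n)\setminus I\}.$$
   Context: Setting: $(S,\mathfrak n)$ is a one-dimensional Noetherian local domain, not regular, with infinite residue field $k$ and quotient field $K$; its integral closure $\overline S$ in $K$ is a DVR and a finite $S$-module, with uniformizer $t$, and $S/\mathfrak n\to\overline S/t\overline S$ is an isomorphism. $\mathrm{Val}$ denotes the valuation of $\overline S$ on $K$ with $\mathrm{Val}(t)=1$. For fractional ideals, $I:_KJ=\{a\in K\mid aJ\subseteq I\}$. For an ideal $I$, $\mathfrak C_I=I:_K\overline S$ and $c(I)$ is the integer with $\mathfrak C_I=t^{c(I)}\overline S$. The Frobenius number of $I$ is $g(I)=\max\{\mathrm{Val}(a)\mid a\in K\setminus I,\ a\neq0\}$. *)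

From HB Require Import structures.
From mathcomp Require Import all_boot all_order all_algebra.
Set Implicit Arguments. Unset Strict Implicit. Unset Printing Implicit Defensive.
Import Order.TTheory GRing.Theory Num.Theory.
Local Open Scope ring_scope.

(* All rings are subsets of a fixed field K (the quotient field of S);
   subsets of K are Prop-valued predicates K -> Prop. *)
Section Defs.
Variable K : fieldType.
Implicit Types (S I J M P Q : K -> Prop).

Definition subring S :=
  [/\ S 0, S 1, (forall x y, S x -> S y -> S (x - y))
    & (forall x y, S x -> S y -> S (x * y))].

Definition quotient_field S :=
  forall x, exists a b, [/\ S a, S b, b != 0 & x = a / b].

Definition is_ideal S I :=
  [/\ (forall x, I x -> S x), I 0, (forall x y, I x -> I y -> I (x + y))
    & (forall r x, S r -> I x -> I (r * x))].

Definition S_comb S (g : seq K) x :=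
  exists c : seq K, [/\ size c = size g, (forall i, S c`_i)
    & x = \sum_(i < size g) c`_i * g`_i].

Definition fin_gen S M :=
  exists g : seq K, (forall i, (i < size g)%N -> M g`_i) /\
    (forall x, M x -> S_comb S g x).

Definition noetherian S := forall J, is_ideal S J -> fin_gen S J.

Definition maxideal S x := S x /\ ~ (exists y, S y /\ x * y = 1).

(* S is local: its non-units form an ideal (the maximal ideal n). *)
Definition local S := is_ideal S (maxideal S).

Definition prime_ideal S P :=
  [/\ is_ideal S P, ~ P 1
    & forall a b, S a -> S b -> P (a * b) -> P a \/ P b].

(* Krull dimension one (S a local domain): (0) is strictly contained in n,
   and every nonzero prime ideal is n. *)
Definition dim_one S :=
  (exists x, maxideal S x /\ x != 0) /\
  forall P, prime_ideal S P -> (exists x, P x /\ x != 0) ->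
    forall x, P x <-> maxideal S x.

(* Not regular: for a one-dimensional local ring, regular means that
   the maximal ideal is principal. *)
Definition not_regular S :=
  ~ exists z, forall y, maxideal S y <-> exists s, S s /\ y = s * z.

Definition residue_infinite S :=
  forall s : seq K, exists x, S x /\ forall y, y \in s -> ~ maxideal S (x - y).

(* Val : K -> int is a (discrete) valuation on K (its value at 0 is
   irrelevant and never used). *)
Definition valuation (Val : K -> int) :=
  (forall x y, x != 0 -> y != 0 -> Val (x * y) = Val x + Val y) /\
  (forall x y, x != 0 -> y != 0 -> x + y != 0 ->
     Num.min (Val x) (Val y) <= Val (x + y)).

(* The valuation ring of Val (this is \overline S). *)
Definition valring (Val : K -> int) x := x = 0 \/ 0 <= Val x.

Definition integral S x :=
  exists p : {poly K}, [/\ p \is monic, (forall i, S p`_i) & root p x].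

Definition integral_closure_is S Val :=
  forall x, integral S x <-> valring Val x.

(* The natural map S/n -> \overline S / t \overline S is an isomorphism:
   its kernel is n and it is surjective.  (x \in t\overline S iff
   x = 0 or Val x >= 1.) *)
Definition residue_iso S (Val : K -> int) :=
  (forall x, S x -> (maxideal S x <-> (x = 0 \/ 0 < Val x))) /\
  (forall v, valring Val v -> exists s, S s /\ (v - s = 0 \/ 0 < Val (v - s))).

Definition setting S (Val : K -> int) (t : K) :=
  [/\ subring S, quotient_field S, noetherian S, local S & dim_one S] /\
  not_regular S /\ residue_infinite S /\
  [/\ valuation Val, t != 0 & Val t = 1] /\
  [/\ integral_closure_is S Val, fin_gen S (valring Val) & residue_iso S Val].

Definition colon I J := fun a => forall x, J x -> I (a * x).

Definition tpow_valring (Val : K -> int) (t : K) (c : int) :=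
  fun x => exists v, valring Val v /\ x = t ^ c * v.

Definition primary S Q :=
  [/\ is_ideal S Q, ~ Q 1
    & forall a b, S a -> S b -> Q (a * b) -> ~ Q a -> exists k, Q (b ^+ k)].

Definition n_primary S I :=
  primary S I /\ forall x, S x -> (maxideal S x <-> exists k, I (x ^+ k)).

End Defs.

Definition is_max (P : int -> Prop) (m : int) :=
  P m /\ forall v, P v -> (v <= m)%R.

From HB Require Import structures.
From mathcomp Require Import all_boot all_order all_algebra.
From mathcomp Require Import zify.
From Stdlib Require Import Classical Wf_nat.
Set Implicit Arguments. Unset Strict Implicit. Unset Printing Implicit Defensive.
Import Order.TTheory GRing.Theory Num.Theory.
Local Open Scope ring_scope.

(* The argument splits into a ring-theoretic part and a purely
   valuation-theoretic part.
   - Ring theory: since \overline S is a finitely generated S-module, it has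
     a common denominator d != 0 (d \overline S \subseteq S); as I is
     n-primary it contains a nonzero x^k, so x^k d is a nonzero element of
     the conductor C = I :_K \overline S.
   - Valuation theory, for any I \subseteq K with 0 \in I and 1 \notin I:
     nonzero elements of C have positive value, and C is closed upwards for
     the valuation.  Hence C = {0} \cup {x | c <= Val x} for the least value
     c of a nonzero element of C, i.e. C = t^c \overline S.  Every nonzero
     x \notin I then has Val x <= c - 1, and since t^(c-1) \notin C some
     t^(c-1) v (v \in \overline S) lies outside I and has value exactly c-1.
   - Finally such an element lies in I :_K n because n \subseteq t\overline S. *)

Lemma nat_least (P : nat -> Prop) :
  (exists n, P n) -> exists m, P m /\ forall k, P k -> (m <= k)%N.
Proof.
move=> Pne.
have [m [[Pm m_least] _]] :=
  @dec_inh_nat_subset_has_unique_least_element P (fun n => classic (P n)) Pne.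
by exists m; split=> // k /m_least/ssrnat.leP.
Qed.

Section ValuationFacts.
Variables (K : fieldType) (Val : K -> int).
Hypothesis ValM : forall x y : K, x != 0 -> y != 0 -> Val (x * y) = Val x + Val y.

Lemma valuation1 : Val 1 = 0.
Proof. by have := @ValM 1 1 (oner_neq0 K) (oner_neq0 K); rewrite mulr1; lia. Qed.

Lemma valuationV (x : K) : x != 0 -> Val x^-1 = - Val x.
Proof.
by move=> x0; have := @ValM x x^-1 x0 (invr_neq0 x0); rewrite mulfV // valuation1; lia.
Qed.

Lemma valuationXn (x : K) (n : nat) : x != 0 -> Val (x ^+ n) = n%:Z * Val x.
Proof.
move=> x0; elim: n => [|n IHn]; first by rewrite expr0 valuation1 mul0r.
by rewrite exprS ValM ?expf_neq0 // IHn -add1n PoszD mulrDl mul1r.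
Qed.

Lemma valuation_uniformizerXz (t : K) (z : int) :
  t != 0 -> Val t = 1 -> Val (t ^ z) = z.
Proof.
move=> t0 Vt; case: z => n; first by rewrite valuationXn // Vt mulr1.
by rewrite /exprz valuationV ?expf_neq0 // valuationXn // Vt mulr1 NegzE.
Qed.

Lemma valring1 : valring Val 1.
Proof. by right; rewrite valuation1. Qed.

End ValuationFacts.

Section CommonDenominator.
Variables (K : fieldType) (S : K -> Prop).
Hypotheses (S_ring : subring S) (S_frac : quotient_field S).

Lemma common_denominator (g : seq K) :
  exists d, [/\ d != 0, S d & forall i, (i < size g)%N -> S (d * g`_i)].
Proof.
have [_ S1 _ SM] := S_ring.
elim: g => [|x g [d [d0 Sd dg]]]; first by exists 1; rewrite oner_neq0.
have [a [b [Sa Sb b0 ->]]] := S_frac x.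
exists (d * b); split; [by rewrite mulf_neq0 | exact: SM |].
case=> [|i] /= ilt; first by rewrite -mulrA [b * _]mulrC divfK //; apply: SM.
by rewrite mulrAC; apply: SM => //; apply: dg.
Qed.

Lemma fin_gen_denominator (M : K -> Prop) :
  fin_gen S M -> exists d, d != 0 /\ forall x, M x -> S (d * x).
Proof.
have [S0 _ SB SM] := S_ring.
have SD x y : S x -> S y -> S (x + y).
  by move=> Sx Sy; have := SB x (0 - y) Sx (SB 0 y S0 Sy); rewrite sub0r opprK.
move=> [g [_ gen]]; have [d [d0 Sd dg]] := common_denominator g.
exists d; split=> // _ /gen [c [_ Sc ->]].
rewrite mulr_sumr; apply: (big_ind S) => // i _.
by rewrite mulrCA; apply: SM => //; apply: dg.
Qed.

Lemma colon_fin_gen_nonzero (I M : K -> Prop) :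
  is_ideal S I -> fin_gen S M -> (exists z, I z /\ z != 0) ->
  exists y, colon I M y /\ y != 0.
Proof.
move=> [_ _ _ ImulS] /fin_gen_denominator [d [d0 dM]] [z [Iz z0]].
exists (z * d); split; last by rewrite mulf_neq0.
by move=> x Mx; rewrite -mulrA mulrC; apply: ImulS => //; apply: dM.
Qed.

End CommonDenominator.

Lemma n_primary_nonzero (K : fieldType) (S I : K -> Prop) :
  dim_one S -> n_primary S I -> exists z, I z /\ z != 0.
Proof.
move=> [[x [nx x0]] _] [_ Irad].
have [k Ixk] := (Irad x nx.1).1 nx.
by exists (x ^+ k); rewrite expf_neq0.
Qed.

Section ConductorOfValring.
Variables (K : fieldType) (Val : K -> int) (I : K -> Prop).
Hypothesis ValM : forall x y : K, x != 0 -> y != 0 -> Val (x * y) = Val x + Val y.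
Hypotheses (I0 : I 0) (I1 : ~ I 1).

Let C := colon I (valring Val).

Lemma conductor_sub (x : K) : C x -> I x.
Proof. by move=> Cx; rewrite -[x]mulr1; apply: Cx; apply: valring1. Qed.

(* Since 1 \notin I, no nonzero x with Val x <= 0 (i.e. x^-1 \in \overline S)
   lies in C. *)
Lemma conductor_pos (x : K) : C x -> x != 0 -> 0 < Val x.
Proof.
move=> Cx x0; rewrite ltNge; apply/negP => Vx_le0; apply: I1.
by rewrite -(mulfV x0); apply: Cx; right; rewrite valuationV //; lia.
Qed.

Lemma conductor_above_in_ideal (y x : K) :
  C y -> y != 0 -> x != 0 -> Val y <= Val x -> I x.
Proof.
move=> Cy y0 x0 le_yx; rewrite -(mulVKf y0 x); apply: Cy; right.
by rewrite ValM ?invr_neq0 // valuationV //; lia.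
Qed.

Lemma conductor_above (y x : K) : C y -> y != 0 -> x != 0 -> Val y <= Val x -> C x.
Proof.
move=> Cy y0 x0 le_yx v [->|Vv]; first by rewrite mulr0.
have [->|v0] := eqVneq v 0; first by rewrite mulr0.
apply: (@conductor_above_in_ideal y (x * v) Cy y0); first by rewrite mulf_neq0.
by rewrite ValM //; lia.
Qed.

(* C is determined by a threshold value c: the least value of its nonzero
   elements. *)
Lemma conductor_threshold :
  (exists y, C y /\ y != 0) ->
  exists c : int, forall x, x != 0 -> C x <-> c <= Val x.
Proof.
move=> [y [Cy y0]].
pose P (n : nat) := exists y, [/\ C y, y != 0 & Val y = n%:Z].
have [|m [[ym [Cym ym0 Vym]] m_least]] := @nat_least P.
  have := conductor_pos Cy y0.
  by case Vy: (Val y) => [n|] // _; exists n, y.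
exists m%:Z => x x0; split=> [Cx | le_mx]; last first.
  by apply: (conductor_above Cym) => //; rewrite Vym.
have := conductor_pos Cx x0.
case Vx: (Val x) => [n|] // _.
by rewrite lez_nat; apply: m_least; exists x.
Qed.

Section Threshold.
Variable c : int.
Hypothesis C_threshold : forall x, x != 0 -> C x <-> c <= Val x.

Lemma conductor_tpow (t x : K) :
  t != 0 -> Val t = 1 -> C x <-> tpow_valring Val t c x.
Proof.
move=> t0 Vt.
have tc0 : t ^ c != 0 by apply: expfz_neq0.
have [->|x0] := eqVneq x 0.
  by split=> _; [exists 0; split; [left | rewrite mulr0] | move=> v _; rewrite mul0r].
rewrite C_threshold //; split=> [le_cx | [v [Vv def_x]]].
  exists ((t ^ c)^-1 * x); split; last by rewrite mulVKf.
  by right; rewrite ValM ?invr_neq0 // valuationV // valuation_uniformizerXz //; lia.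
have v0 : v != 0 by apply: contraNneq x0 => v0; rewrite def_x v0 mulr0.
case: Vv => [/eqP|Vv]; first by rewrite (negbTE v0).
by rewrite def_x ValM // valuation_uniformizerXz //; lia.
Qed.

Lemma outside_ideal_val (x : K) : x != 0 -> ~ I x -> Val x <= c - 1.
Proof.
move=> x0 nIx; rewrite leNgt; apply/negP => gt_x; apply: nIx.
by apply/conductor_sub/(C_threshold x0); lia.
Qed.

(* The value c - 1 is attained outside I, since t^(c-1) is not in C. *)
Lemma outside_ideal_attained (t : K) :
  t != 0 -> Val t = 1 -> exists a, [/\ a != 0, ~ I a & Val a = c - 1].
Proof.
move=> t0 Vt.
have tc1 : t ^ (c - 1) != 0 by apply: expfz_neq0.
have [v [Vv nIa]] : exists v, valring Val v /\ ~ I (t ^ (c - 1) * v).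
  apply: NNPP => noWitness.
  suff : c <= Val (t ^ (c - 1)) by rewrite valuation_uniformizerXz //; lia.
  apply/(C_threshold tc1) => v Vv.
  by apply: NNPP => nIv; apply: noWitness; exists v.
have a0 : t ^ (c - 1) * v != 0 by apply: contra_not_neq nIa => ->.
have v0 : v != 0 by apply: contraNneq a0 => ->; rewrite mulr0.
exists (t ^ (c - 1) * v); split=> //.
have := outside_ideal_val a0 nIa.
rewrite ValM // valuation_uniformizerXz //.
by case: Vv => [/eqP|Vv]; [rewrite (negbTE v0) | lia].
Qed.

Lemma colon_of_positive (Q : K -> Prop) (a : K) :
  (forall x, Q x -> x = 0 \/ 0 < Val x) -> a != 0 -> Val a = c - 1 ->
  colon I Q a.
Proof.
move=> Qpos a0 Va x /Qpos [->|Vx]; first by rewrite mulr0.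
have [->|x0] := eqVneq x 0; first by rewrite mulr0.
apply: conductor_sub; apply/C_threshold; first by rewrite mulf_neq0.
by rewrite ValM // Va; lia.
Qed.

End Threshold.

End ConductorOfValring.

Theorem lemma4p3 (K : fieldType) (S : K -> Prop) (Val : K -> int) (t : K)
    (I : K -> Prop) :
  setting S Val t -> n_primary S I ->
  exists c : int,
    (forall x, colon I (valring Val) x <-> tpow_valring Val t c x) /\
    is_max (fun v => exists a, [/\ a != 0, ~ I a & Val a = v]) (c - 1) /\
    is_max (fun v => exists a, [/\ colon I (maxideal S) a, ~ I a & Val a = v])
      (c - 1).
Proof.
move=> [[S_ring S_frac _ _ S_dim] [_ [_ [[[ValM _] t0 Vt] [_ Vfg [Sres _]]]]]].
move=> In; have [[I_ideal I1 _] _] := In; have [_ I0 _ _] := I_ideal.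
have C_nonzero := colon_fin_gen_nonzero S_ring S_frac I_ideal Vfg
  (n_primary_nonzero S_dim In).
have [c C_thr] := conductor_threshold ValM I0 I1 C_nonzero.
have [a [a0 nIa Va]] := outside_ideal_attained ValM I0 C_thr t0 Vt.
have n_pos x : maxideal S x -> x = 0 \/ 0 < Val x.
  by move=> nx; apply/(Sres x nx.1).1.
exists c; split; first by move=> x; apply: (conductor_tpow ValM I0 C_thr).
split; split.
- by exists a.
- move=> _ [x [x0 nIx <-]]; exact: (outside_ideal_val ValM C_thr x0 nIx).
- exists a; split=> //; exact: (colon_of_positive ValM I0 C_thr n_pos a0 Va).
- move=> _ [x [_ nIx <-]]; apply: (outside_ideal_val ValM C_thr _ nIx).
  by apply: contra_not_neq nIx => ->.
Qed.
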